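(* Let $(X,d)$ be a complete metric space and let $T:X\to X$ be a mapping for which there exists $\gamma\in[0,\tfrac12)$ such that $$d(Tx,T^2x)+d(T^2x,Ty)+d(Ty,Tx)\le \gamma\,[\,d(x,Ty)+d(y,Tx)+d(x,T^2x)+d(y,T^2x)+d(Tx,Ty)\,]$$ for all $x,y\in X$ with $x\neq y$ and $y\neq Tx$ (i.e. $T$ is a generalized orbital triangular Chatterjea contraction). Suppose that $T$ has no periodic points of prime period $2$. Then $T$ has a unique fixed point.
   Context: A point $x\in X$ is a periodic point of period $n$ of $T$ if $T^n x=x$; the least positive integer $n$ with $T^nx=x$ is its prime period. Thus ''no periodic points of prime period $2$'' means there is no $x\in X$ with $T^2x=x$ and $Tx\neq x$. The condition ''$x\neq y\neq Tx$'' in the paper means $x\neq y$ and $y\neq Tx$. *)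

From Stdlib Require Import Reals.
Open Scope R_scope.

Definition is_metric {X : Type} (d : X -> X -> R) : Prop :=
  (forall x y, 0 <= d x y) /\
  (forall x y, d x y = 0 <-> x = y) /\
  (forall x y, d x y = d y x) /\
  (forall x y z, d x z <= d x y + d y z).

Definition cauchy_seq {X : Type} (d : X -> X -> R) (u : nat -> X) : Prop :=
  forall eps, 0 < eps -> exists N, forall m n, (N <= m)%nat -> (N <= n)%nat -> d (u m) (u n) < eps.

Definition converges_to {X : Type} (d : X -> X -> R) (u : nat -> X) (l : X) : Prop :=
  forall eps, 0 < eps -> exists N, forall n, (N <= n)%nat -> d (u n) l < eps.

Definition complete_metric {X : Type} (d : X -> X -> R) : Prop :=
  is_metric d /\ forall u, cauchy_seq d u -> exists l, converges_to d u l.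

Definition gotc {X : Type} (d : X -> X -> R) (T : X -> X) : Prop :=
  exists gamma, 0 <= gamma < 1/2 /\
    forall x y, x <> y -> y <> T x ->
      d (T x) (T (T x)) + d (T (T x)) (T y) + d (T y) (T x)
      <= gamma * (d x (T y) + d y (T x) + d x (T (T x)) + d y (T (T x)) + d (T x) (T y)).

Definition no_prime_period_2 {X : Type} (T : X -> X) : Prop :=
  ~ exists x, T (T x) = x /\ T x <> x.

(** The perimeter [p y = d(y,Ty) + d(Ty,T²y) + d(y,T²y)] of the orbital
    triangle at [y] shrinks by the factor [γ/(1-γ) < 1] under [T] as long as
    [y, Ty, T²y] are pairwise distinct, which is guaranteed at every point once
    [T] has neither fixed points nor points of prime period 2.  Then every orbit
    has geometrically decreasing steps, hence is Cauchy, and its limit [z] is a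
    fixed point: applying the contraction to [x_n] and [z] gives in the limit
    [2 d(z,Tz) <= 2γ d(z,Tz)].  Two fixed points [u <> v] would give
    [2 d(u,v) <= 4γ d(u,v)]. *)

From Stdlib Require Import Reals Lra Lia Classical.
Open Scope R_scope.

Set Implicit Arguments.

Lemma orbit_eventually_avoids (X : Type) (T : X -> X) (x z : X) :
  T z <> z -> no_prime_period_2 T ->
  forall N, exists n, (N <= n)%nat /\ Nat.iter n T x <> z /\ Nat.iter (S n) T x <> z.
Proof.
  intros Hz H2 N.
  assert (HTTz : T (T z) <> z) by (intro h; apply H2; exists z; auto).
  destruct (classic (Nat.iter N T x = z)) as [e0 | n0].
  - exists (S N); simpl; rewrite e0; auto.
  - destruct (classic (Nat.iter (S N) T x = z)) as [e1 | n1].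
    + exists (S (S N)); simpl in *; rewrite e1; auto.
    + exists N; auto.
Qed.

Section Metric.

Variables (X : Type) (d : X -> X -> R).
Hypothesis Hd : is_metric d.

Lemma dist_nonneg x y : 0 <= d x y.
Proof. apply Hd. Qed.

Lemma dist_refl x : d x x = 0.
Proof. apply Hd; reflexivity. Qed.

Lemma dist_sym x y : d x y = d y x.
Proof. apply Hd. Qed.

Lemma dist_triangle x y z : d x z <= d x y + d y z.
Proof. apply Hd. Qed.

Lemma dist_pos x y : x <> y -> 0 < d x y.
Proof.
  intros Hxy; destruct (Rle_lt_or_eq_dec _ _ (dist_nonneg x y)) as [h | h]; auto.
  exfalso; apply Hxy, Hd; auto.
Qed.

Lemma geometric_cauchy (u : nat -> X) (C q : R) :
  0 <= q < 1 -> (forall n, d (u n) (u (S n)) <= q ^ n * C) -> cauchy_seq d u.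
Proof.
  intros [Hq0 Hq1] Hstep.
  set (M := C / (1 - q)).
  assert (HM : 0 <= M).
  { assert (0 <= C) by (pose proof (Hstep O); pose proof (dist_nonneg (u O) (u 1%nat)); simpl in *; lra).
    unfold M, Rdiv; apply Rmult_le_pos; [lra | left; apply Rinv_0_lt_compat; lra]. }
  assert (Hfar : forall n k, d (u n) (u (n + k)%nat) <= M * (q ^ n - q ^ (n + k))).
  { intros n k; induction k as [| k IH].
    - rewrite Nat.add_0_r, dist_refl; lra.
    - rewrite Nat.add_succ_r.
      pose proof (dist_triangle (u n) (u (n + k)%nat) (u (S (n + k)))).
      pose proof (Hstep (n + k)%nat).
      replace (M * (q ^ n - q ^ S (n + k))) with (M * (q ^ n - q ^ (n + k)) + q ^ (n + k) * C)
        by (unfold M; simpl; field; lra).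
      lra. }
  assert (Hnear : forall n k, d (u n) (u (n + k)%nat) <= M * q ^ n).
  { intros n k; pose proof (Hfar n k).
    assert (0 <= M * q ^ (n + k)) by (apply Rmult_le_pos; [exact HM | apply pow_le; exact Hq0]).
    lra. }
  intros eps Heps.
  assert (Hsmall : 0 < eps / (M + 1)) by (apply Rdiv_lt_0_compat; lra).
  destruct (pow_lt_1_zero q ltac:(rewrite Rabs_right; lra) _ Hsmall) as [N HN].
  assert (Hclose : forall n k, (N <= n)%nat -> d (u n) (u (n + k)%nat) < eps).
  { intros n k Hn.
    pose proof (HN n Hn) as Hqn; rewrite Rabs_right in Hqn by (apply Rle_ge, pow_le; exact Hq0).
    assert (M * q ^ n <= M * (eps / (M + 1))) by (apply Rmult_le_compat_l; lra).
    replace (M * (eps / (M + 1))) with (eps - eps / (M + 1)) in * by (field; lra).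
    pose proof (Hnear n k); lra. }
  exists N; intros m n Hm Hn.
  destruct (Nat.le_ge_cases m n).
  - replace n with (m + (n - m))%nat by lia; auto.
  - replace m with (n + (m - n))%nat by lia; rewrite dist_sym; auto.
Qed.

Section Chatterjea.

Variables (T : X -> X) (gamma : R).
Hypothesis Hgamma : 0 <= gamma < 1/2.
Hypothesis Hcontr : forall x y, x <> y -> y <> T x ->
  d (T x) (T (T x)) + d (T (T x)) (T y) + d (T y) (T x)
  <= gamma * (d x (T y) + d y (T x) + d x (T (T x)) + d y (T (T x)) + d (T x) (T y)).

Lemma fixed_point_unique u v : T u = u -> T v = v -> u = v.
Proof.
  intros Hu Hv; destruct (classic (u = v)) as [e | Hne]; auto.
  assert (Hne' : v <> T u) by (rewrite Hu; auto).
  pose proof (Hcontr Hne Hne') as H; rewrite Hu, Hu, Hv, dist_refl, (dist_sym v u) in H.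
  pose proof (dist_pos Hne); nra.
Qed.

Definition perimeter y := d y (T y) + d (T y) (T (T y)) + d y (T (T y)).

Lemma dist_step_le_perimeter y : d y (T y) <= perimeter y.
Proof.
  unfold perimeter; pose proof (dist_nonneg (T y) (T (T y))).
  pose proof (dist_nonneg y (T (T y))); lra.
Qed.

Lemma perimeter_contraction y :
  T y <> y -> T (T y) <> y -> (1 - gamma) * perimeter (T y) <= gamma * perimeter y.
Proof.
  intros H1 H2.
  pose proof (Hcontr H1 (not_eq_sym H2)) as H.
  rewrite dist_refl, (dist_sym (T (T (T y))) (T y)), (dist_sym (T (T y)) (T y)) in H.
  pose proof (dist_triangle y (T y) (T (T (T y)))).
  pose proof (dist_triangle (T y) (T (T y)) (T (T (T y)))).
  assert (gamma * (d y (T (T y)) + d (T y) (T (T (T y))) + d y (T (T (T y))) + d (T y) (T (T y)))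
          <= gamma * (perimeter y + perimeter (T y)))
    by (apply Rmult_le_compat_l; unfold perimeter; lra).
  unfold perimeter in *; lra.
Qed.

Lemma contraction_ratio_bounds : 0 <= gamma / (1 - gamma) < 1.
Proof.
  split.
  - unfold Rdiv; apply Rmult_le_pos; [lra | left; apply Rinv_0_lt_compat; lra].
  - apply (Rmult_lt_reg_r (1 - gamma)); [lra |].
    unfold Rdiv; rewrite Rmult_assoc, Rinv_l; lra.
Qed.

Lemma fixed_defect_le y z :
  y <> z -> T y <> z ->
  2 * (1 - gamma) * d z (T z) <= d y z + 2 * d (T y) z + 2 * d (T (T y)) z.
Proof.
  intros H0 H1.
  pose proof (Hcontr H0 (not_eq_sym H1)) as H.
  rewrite (dist_sym z (T y)), (dist_sym z (T (T y))), (dist_sym (T z) (T y)) in H.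
  pose proof (dist_triangle z (T (T y)) (T z)).
  pose proof (dist_triangle z (T y) (T z)).
  pose proof (dist_triangle y z (T z)).
  pose proof (dist_triangle (T y) z (T z)).
  pose proof (dist_triangle y z (T (T y))).
  pose proof (dist_nonneg (T y) (T (T y))).
  pose proof (dist_nonneg y z); pose proof (dist_nonneg (T y) z);
    pose proof (dist_nonneg (T (T y)) z).
  rewrite (dist_sym z (T (T y))), (dist_sym z (T y)) in *.
  set (e := d y z + d (T y) z + d (T (T y)) z) in *.
  assert (gamma * (d y (T z) + d (T y) z + d y (T (T y)) + d (T (T y)) z + d (T y) (T z))
          <= gamma * (2 * d z (T z) + 2 * e))
    by (apply Rmult_le_compat_l; unfold e; lra).
  assert (2 * gamma * e <= e) by (assert (0 <= e) by (unfold e; lra); nra).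
  unfold e in *; lra.
Qed.

Lemma orbit_limit_fixed x z :
  no_prime_period_2 T -> converges_to d (fun n => Nat.iter n T x) z -> T z = z.
Proof.
  intros H2 Hlim; apply NNPP; intro Hz.
  pose proof (dist_pos (not_eq_sym Hz)) as HD.
  destruct (Hlim (2 * (1 - gamma) * d z (T z) / 5)) as [N HN].
  { apply Rdiv_lt_0_compat; [apply Rmult_lt_0_compat |]; lra. }
  destruct (orbit_eventually_avoids x Hz H2 N) as [n [Hn [H0 H1]]].
  pose proof (fixed_defect_le H0 H1).
  pose proof (HN n Hn); pose proof (HN (S n) ltac:(lia)); pose proof (HN (S (S n)) ltac:(lia)).
  simpl in *; lra.
Qed.

Section NoFixedPoint.

Hypothesis Hfree : forall y, T y <> y.
Hypothesis H2 : no_prime_period_2 T.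

Lemma perimeter_step_le y : perimeter (T y) <= gamma / (1 - gamma) * perimeter y.
Proof.
  assert (HTT : T (T y) <> y) by (intro h; apply H2; exists y; auto).
  apply (Rmult_le_reg_l (1 - gamma)); [lra |].
  replace ((1 - gamma) * (gamma / (1 - gamma) * perimeter y)) with (gamma * perimeter y)
    by (field; lra).
  apply perimeter_contraction; auto.
Qed.

Lemma orbit_perimeter_le x n :
  perimeter (Nat.iter n T x) <= (gamma / (1 - gamma)) ^ n * perimeter x.
Proof.
  induction n as [| n IH]; simpl; [lra |].
  pose proof (perimeter_step_le (Nat.iter n T x)).
  pose proof contraction_ratio_bounds.
  assert (gamma / (1 - gamma) * perimeter (Nat.iter n T x)
          <= gamma / (1 - gamma) * ((gamma / (1 - gamma)) ^ n * perimeter x))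
    by (apply Rmult_le_compat_l; lra).
  lra.
Qed.

Lemma orbit_cauchy x : cauchy_seq d (fun n => Nat.iter n T x).
Proof.
  apply (geometric_cauchy _ (C := perimeter x) contraction_ratio_bounds).
  intro n; pose proof (dist_step_le_perimeter (Nat.iter n T x)).
  pose proof (orbit_perimeter_le x n); simpl in *; lra.
Qed.

End NoFixedPoint.

End Chatterjea.

End Metric.

Theorem theorem5p1 (X : Type) (x0 : X) (d : X -> X -> R) (T : X -> X)
  (Hcomp : complete_metric d) (HT : gotc d T) (H2 : no_prime_period_2 T) :
  exists! x, T x = x.
Proof.
  destruct Hcomp as [Hd Hcpl]; destruct HT as [gamma [Hgamma Hcontr]].
  destruct (classic (exists z, T z = z)) as [[z Hz] | Hnofix].
  - exists z; split; [exact Hz |].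
    intros y Hy; eapply fixed_point_unique; eassumption.
  - exfalso.
    assert (Hfree : forall y, T y <> y) by (intros y Hy; apply Hnofix; eauto).
    destruct (Hcpl _ (orbit_cauchy Hd Hgamma Hcontr Hfree H2 x0)) as [z Hz].
    apply (Hfree z); eapply orbit_limit_fixed; eassumption.
Qed.
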